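(* Let $A$ be a Banach lattice algebra with identity $e$ and let $p\in BP(A)$. The following are equivalent: (i) $p\in OI(A)$; (ii) $p^2=p$; (iii) $p\in A_e$; (iv) there exists $\lambda>\|p\|$ such that $(\lambda e+p)^{-1}\ge 0$.
   Context: A Banach lattice algebra is a real Banach lattice $A$ with an associative bilinear product making $(A,\cdot)$ a Banach algebra such that $xy\ge0$ whenever $x,y\ge 0$. It has identity $e$ if $e$ is a multiplicative identity with $\|e\|=1$ (such $e$ is automatically positive). $A_e=\{x\in A: |x|\le\lambda e\text{ for some }\lambda\ge0\}$ is the order ideal generated by $e$. $L_a(x)=ax$, $R_a(x)=xa$. A band projection on a Banach lattice $X$ is an operator $P$ with $P^2=P$, $0\le P\le I_X$. $BP(A)=\{a\in A_+: L_aR_a\colon A\to A \text{ is a band projection}\}$. $OI(A)=\{p\in A: p^2=p,\ 0\le p\le e\}$ (order idempotents). For $\lambda>\|p\|$, $\lambda e+p$ is invertible. *)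

From HB Require Import structures.
From mathcomp Require Import all_boot all_order all_algebra.
From mathcomp Require Import all_classical all_reals all_analysis.
Set Implicit Arguments. Unset Strict Implicit. Unset Printing Implicit Defensive.
Import Order.TTheory GRing.Theory Num.Theory.
Import numFieldNormedType.Exports.
Local Open Scope ring_scope.

(* A (real) Banach lattice algebra with identity, on a real Banach space V
   (complete normed module over a realType R).
   - [ble] is the vector-lattice order, [bjoin] the lattice supremum;
   - |x| := x \/ (-x); lattice norm: |x| <= |y| -> ||x|| <= ||y||;
   - [bmul] is an associative bilinear submultiplicative product,
     positive on positive elements;
   - [bid] is a multiplicative identity of norm 1. *)
Record BanachLatticeAlgebra (R : realType) (V : completeNormedModType R) := {
  ble : V -> V -> Prop;
  ble_refl : forall x, ble x x;
  ble_trans : forall x y z, ble x y -> ble y z -> ble x z;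
  ble_anti : forall x y, ble x y -> ble y x -> x = y;
  ble_add : forall x y z, ble x y -> ble (x + z) (y + z);
  ble_scale : forall (a : R) x y, 0 <= a -> ble x y -> ble (a *: x) (a *: y);
  bjoin : V -> V -> V;
  bjoin_ubl : forall x y, ble x (bjoin x y);
  bjoin_ubr : forall x y, ble y (bjoin x y);
  bjoin_lub : forall x y z, ble x z -> ble y z -> ble (bjoin x y) z;
  blattice_norm : forall x y,
    ble (bjoin x (- x)) (bjoin y (- y)) -> `|x| <= `|y|;
  bmul : V -> V -> V;
  bmulA : forall x y z, bmul x (bmul y z) = bmul (bmul x y) z;
  bmulDl : forall x y z, bmul (x + y) z = bmul x z + bmul y z;
  bmulDr : forall x y z, bmul x (y + z) = bmul x y + bmul x z;
  bmulZl : forall (a : R) x y, bmul (a *: x) y = a *: bmul x y;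
  bmulZr : forall (a : R) x y, bmul x (a *: y) = a *: bmul x y;
  bmul_norm : forall x y, `|bmul x y| <= `|x| * `|y|;
  bmul_pos : forall x y, ble 0 x -> ble 0 y -> ble 0 (bmul x y);
  bid : V;
  bmul1l : forall x, bmul bid x = x;
  bmul1r : forall x, bmul x bid = x;
  bid_norm : `|bid| = 1
}.

Arguments BanachLatticeAlgebra : clear implicits.

Section BLADefs.
Context {R : realType} {V : completeNormedModType R} (A : BanachLatticeAlgebra R V).

Definition babs (x : V) : V := bjoin A x (- x).

Definition is_band_projection (P : V -> V) : Prop :=
  (forall x y, P (x + y) = P x + P y) /\
  (forall (a : R) x, P (a *: x) = a *: P x) /\
  continuous P /\
  (forall x, P (P x) = P x) /\
  (forall x, ble A 0 x -> ble A 0 (P x) /\ ble A (P x) x).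

Definition LR (a : V) : V -> V := fun x => bmul A a (bmul A x a).

Definition BP (a : V) : Prop := ble A 0 a /\ is_band_projection (LR a).

Definition OI (p : V) : Prop :=
  bmul A p p = p /\ ble A 0 p /\ ble A p (bid A).

Definition in_Ae (x : V) : Prop :=
  exists lambda : R, 0 <= lambda /\ ble A (babs x) (lambda *: bid A).

Definition is_inverse (x q : V) : Prop :=
  bmul A x q = bid A /\ bmul A q x = bid A.

End BLADefs.

From HB Require Import structures.
From mathcomp Require Import all_boot all_order all_algebra.
From mathcomp Require Import all_classical all_reals all_analysis.
Import Order.TTheory GRing.Theory Num.Theory.
Import numFieldNormedType.Exports.
Local Open Scope ring_scope.
Set Implicit Arguments. Unset Strict Implicit.

(* For p in BP(A), the band projection P = L_p R_p yields p >= 0, p^2 = P e <= e,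
   p^3 = P p <= p and p^4 = P (P e) = p^2.  Squares of elements of A_e are
   positive, because the positive and negative parts of such an element are
   disjoint and dominated by multiples of e, so their cross products vanish.
   Applied to p - p^2 this gives p^3 = p^2, hence r = p - p^2 is a positive
   element of A_e with r^2 = 0; then (e - n r)^2 = e - 2 n r >= 0 for every n,
   which forces r = 0.  This is (iii) => (ii); conversely an idempotent p has
   (lambda e + p)^-1 = lambda^-1 (e - (lambda + 1)^-1 p) >= 0, and
   (lambda e + p) q = e with q >= 0 gives p <= (lambda + lambda^-1) e. *)

Lemma natrM_le1_eq0 (R : realType) (c : R) :
  0 <= c -> (forall n : nat, n%:R * c <= 1) -> c = 0.
Proof.
move=> c_ge0 nc_le1; apply/eqP; rewrite eq_le c_ge0 andbT leNgt; apply/negP => c_gt0.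
have : 1 < (Num.truncn c^-1).+1%:R * c.
  by rewrite -[X in X < _](mulVf (lt0r_neq0 c_gt0)) ltr_pM2r // truncnS_gt.
by move/lt_le_trans/(_ (nc_le1 _)); rewrite ltxx.
Qed.

Section BanachLatticeAlgebraTheory.
Variables (R : realType) (V : completeNormedModType R) (A : BanachLatticeAlgebra R V).
Local Notation "x <=: y" := (ble A x y) (at level 70).
Local Notation "x ⊙ y" := (bmul A x y) (at level 40, left associativity).
Local Notation e := (bid A).

Lemma ble_subr_ge0 x y : x <=: y -> 0 <=: y - x.
Proof. by move/(ble_add (- x)); rewrite subrr. Qed.

Lemma subr_ge0_ble x y : 0 <=: y - x -> x <=: y.
Proof. by move/(ble_add x); rewrite add0r subrK. Qed.

Lemma bleD x y u v : x <=: y -> u <=: v -> x + u <=: y + v.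
Proof.
move=> xy uv; apply: ble_trans (ble_add u xy) _.
by rewrite ![y + _]addrC; apply: ble_add.
Qed.

Lemma bleN x y : x <=: y -> - y <=: - x.
Proof. by move/ble_subr_ge0=> xy; apply: subr_ge0_ble; rewrite opprK addrC. Qed.

Lemma ble_addr x y : 0 <=: y -> x <=: x + y.
Proof. by move=> y_ge0; apply: subr_ge0_ble; rewrite addrC addKr. Qed.

Lemma bscale_ge0 (a : R) x : 0 <= a -> 0 <=: x -> 0 <=: a *: x.
Proof. by move=> a_ge0 /(ble_scale a_ge0); rewrite scaler0. Qed.

Lemma ble_scaleV (m : R) z x : 0 < m -> z <=: m *: x -> m^-1 *: z <=: x.
Proof.
move=> m_gt0; have minv_ge0 : 0 <= m^-1 by rewrite invr_ge0 ltW.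
by move/(ble_scale minv_ge0); rewrite scalerA mulVf ?gt_eqF // scale1r.
Qed.

Lemma bhalf_ge0 x : 0 <=: x + x -> 0 <=: x.
Proof.
rewrite -mulr2n -scaler_nat => /(ble_scaleV (ltr0n R 2)).
by rewrite scaler0.
Qed.

Lemma babs_ge0 x : 0 <=: babs A x.
Proof.
by apply: bhalf_ge0; rewrite -(subrr x); apply: bleD; [exact: bjoin_ubl | exact: bjoin_ubr].
Qed.

Lemma babs_id x : 0 <=: x -> babs A x = x.
Proof.
move=> x_ge0; apply: ble_anti; last exact: bjoin_ubl.
apply: bjoin_lub; first exact: ble_refl.
by apply: (ble_trans _ x_ge0); rewrite -oppr0; apply: bleN.
Qed.

Lemma norm_ble x y : 0 <=: x -> x <=: y -> `|x| <= `|y|.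
Proof.
move=> x_ge0 xy; apply: (blattice_norm (b:=A)).
by rewrite -/(babs A x) -/(babs A y) !babs_id //; apply: ble_trans xy.
Qed.

Lemma bmulNl x y : (- x) ⊙ y = - (x ⊙ y).
Proof. by rewrite -scaleN1r bmulZl scaleN1r. Qed.

Lemma bmulNr x y : x ⊙ (- y) = - (x ⊙ y).
Proof. by rewrite -scaleN1r bmulZr scaleN1r. Qed.

Lemma bmulBl x y z : (x - y) ⊙ z = x ⊙ z - y ⊙ z.
Proof. by rewrite bmulDl bmulNl. Qed.

Lemma bmulBr x y z : z ⊙ (x - y) = z ⊙ x - z ⊙ y.
Proof. by rewrite bmulDr bmulNr. Qed.

Lemma bmul_le2l c x y : 0 <=: c -> x <=: y -> c ⊙ x <=: c ⊙ y.
Proof. by move=> c_ge0 /ble_subr_ge0 xy; apply: subr_ge0_ble; rewrite -bmulBr; apply: bmul_pos. Qed.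

Lemma bmul_le2r c x y : 0 <=: c -> x <=: y -> x ⊙ c <=: y ⊙ c.
Proof. by move=> c_ge0 /ble_subr_ge0 xy; apply: subr_ge0_ble; rewrite -bmulBl; apply: bmul_pos. Qed.

Fixpoint bpow (x : V) (n : nat) : V := if n is n'.+1 then bpow x n' ⊙ x else e.

Lemma bpow_norm_le1 x n : `|x| <= 1 -> `|bpow x n| <= 1.
Proof.
move=> x_le1; elim: n => [|n IHn] /=; first by rewrite bid_norm.
by apply: le_trans (bmul_norm _ _ _) _; apply: mulr_ile1.
Qed.

Lemma bernoulli_bpow a n : 0 <=: a -> 0 <=: e + a ->
  e + n%:R *: a <=: bpow (e + a) n.
Proof.
move=> a_ge0 b_ge0; elim: n => [|n IHn] /=; first by rewrite scale0r addr0; apply: ble_refl.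
apply: ble_trans (bmul_le2r b_ge0 IHn).
have -> : (e + n%:R *: a) ⊙ (e + a) = e + n.+1%:R *: a + n%:R *: (a ⊙ a).
  rewrite bmulDl bmul1l bmulZl bmulDr bmul1r scalerDr -addn1 natrD scalerDl scale1r.
  by rewrite !addrA; congr (_ + _); rewrite -!addrA; congr (_ + _); rewrite addrC.
by apply: ble_addr; apply: bscale_ge0 => //; apply: bmul_pos.
Qed.

Lemma ble_archimedean a : 0 <=: a ->
  (forall n : nat, exists2 b, n%:R *: a <=: b & `|b| <= 1) -> a = 0.
Proof.
move=> a_ge0 bounded; apply: normr0_eq0; apply: natrM_le1_eq0 => // n.
have [b nab b_le1] := bounded n.
rewrite -[n%:R]ger0_norm // -normrZ; apply: le_trans b_le1.
exact: norm_ble (bscale_ge0 (ler0n R n) a_ge0) nab.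
Qed.

(* The identity is not assumed positive: with b = e \/ 0 = e + a, the powers
   of b have norm at most 1 and dominate n a, so a = 0. *)
Lemma bid_ge0 : 0 <=: e.
Proof.
set b := bjoin A e 0; set a := b - e.
have b_ge0 : 0 <=: b := bjoin_ubr A e 0.
have a_ge0 : 0 <=: a := ble_subr_ge0 (bjoin_ubl A e 0).
have bE : b = e + a by rewrite addrC subrK.
have b_le1 : `|b| <= 1.
  rewrite -(bid_norm A); apply: (blattice_norm (b:=A)).
  rewrite -/(babs A b) -/(babs A e) babs_id //.
  by apply: bjoin_lub; [exact: bjoin_ubl | exact: babs_ge0].
suff a0 : a = 0 by rewrite bE a0 addr0 in b_ge0.
apply: ble_archimedean => // n; exists (bpow b n.+1); last exact: bpow_norm_le1.
apply: ble_trans (ble_addr (n%:R *: a) b_ge0) _.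
have -> : n%:R *: a + b = e + n.+1%:R *: a.
  by rewrite bE -addn1 natrD scalerDl scale1r addrCA addrA.
by rewrite bE; apply: bernoulli_bpow => //; rewrite -bE.
Qed.

Lemma ble_scale_e (m1 m2 : R) : m1 <= m2 -> m1 *: e <=: m2 *: e.
Proof.
by move=> m12; apply: subr_ge0_ble; rewrite -scalerBl; apply: bscale_ge0 bid_ge0; rewrite subr_ge0.
Qed.

Lemma in_Ae_bounds x (a b : R) : 0 <= a -> 0 <= b ->
  x <=: a *: e -> - x <=: b *: e -> in_Ae A x.
Proof.
move=> a_ge0 b_ge0 xa xb; exists (a + b); split; first exact: addr_ge0.
by apply: bjoin_lub; [apply: ble_trans xa _ | apply: ble_trans xb _];
  apply: ble_scale_e; rewrite ?lerDl ?lerDr.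
Qed.

Definition bdisjoint x y := forall z, z <=: x -> z <=: y -> z <=: 0.
Definition bpos x := bjoin A x 0.
Definition bneg x := bpos x - x.

Lemma bdisjointC x y : bdisjoint x y -> bdisjoint y x.
Proof. by move=> dxy z zy zx; apply: dxy. Qed.

Lemma bpos_ge0 x : 0 <=: bpos x.
Proof. exact: bjoin_ubr. Qed.

Lemma bneg_ge0 x : 0 <=: bneg x.
Proof. exact: ble_subr_ge0 (bjoin_ubl A x 0). Qed.

Lemma bpos_negE x : bpos x - bneg x = x.
Proof. by rewrite /bneg opprB addrC subrK. Qed.

Lemma bdisjoint_pos_neg x : bdisjoint (bpos x) (bneg x).
Proof.
move=> z zp /ble_subr_ge0; rewrite /bneg addrAC => /subr_ge0_ble xz.
have /ble_subr_ge0 : bpos x <=: bpos x - z by apply: bjoin_lub => //; exact: ble_subr_ge0 zp.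
by rewrite addrAC subrr add0r => /bleN; rewrite opprK oppr0.
Qed.

Lemma bpos_le_babs x : bpos x <=: babs A x.
Proof. by apply: bjoin_lub; [exact: bjoin_ubl | exact: babs_ge0]. Qed.

Lemma bneg_le_babs x : bneg x <=: babs A x.
Proof.
apply: subr_ge0_ble; rewrite /bneg opprB addrA; apply: ble_subr_ge0.
apply: bjoin_lub; first by rewrite addrC; apply: ble_addr; exact: babs_ge0.
by rewrite -[x in _ + x]opprK; apply: ble_subr_ge0; exact: bjoin_ubr.
Qed.

Lemma bmul_disjoint_eq0 x y (m : R) : 0 < m -> 0 <=: x -> 0 <=: y ->
  bdisjoint x y -> x <=: m *: e -> y <=: m *: e -> x ⊙ y = 0.
Proof.
move=> m_gt0 x_ge0 y_ge0 dxy xm ym.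
have le_mx : x ⊙ y <=: m *: x.
  by rewrite -[X in _ <=: m *: X](bmul1r A x) -bmulZr; apply: bmul_le2l.
have le_my : x ⊙ y <=: m *: y.
  by rewrite -[X in _ <=: m *: X](bmul1l A y) -bmulZl; apply: bmul_le2r.
have : m^-1 *: (x ⊙ y) = 0.
  apply: ble_anti; first by apply: dxy; apply: ble_scaleV.
  by apply: bscale_ge0; [rewrite invr_ge0 ltW | apply: bmul_pos].
by move/eqP; rewrite scaler_eq0 invr_eq0 gt_eqF //= => /eqP.
Qed.

Lemma bsqr_ge0_Ae x : in_Ae A x -> 0 <=: x ⊙ x.
Proof.
case=> l [l_ge0 xl]; have m_gt0 : 0 < l + 1 by rewrite ltr_wpDl.
have le_m z : z <=: babs A x -> z <=: (l + 1) *: e.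
  by move=> zx; apply: ble_trans zx (ble_trans xl _); apply: ble_scale_e; rewrite lerDl.
have [xp_ge0 xn_ge0] := (bpos_ge0 x, bneg_ge0 x).
have [xp_le xn_le] := (le_m _ (bpos_le_babs x), le_m _ (bneg_le_babs x)).
have dx := @bdisjoint_pos_neg x.
have pn0 := bmul_disjoint_eq0 m_gt0 xp_ge0 xn_ge0 dx xp_le xn_le.
have np0 := bmul_disjoint_eq0 m_gt0 xn_ge0 xp_ge0 (bdisjointC dx) xn_le xp_le.
rewrite -(bpos_negE x) bmulBl [bpos x ⊙ _]bmulBr [bneg x ⊙ _]bmulBr pn0 np0.
by rewrite subr0 sub0r opprK -(addr0 0); apply: bleD; apply: bmul_pos.
Qed.

Lemma Ae_sqr0_ge0_eq0 r : 0 <=: r -> in_Ae A r -> r ⊙ r = 0 -> r = 0.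
Proof.
move=> r_ge0 [m [m_ge0 rm]] rr0; rewrite babs_id // in rm.
apply: ble_archimedean => // n; exists e; last by rewrite bid_norm.
have nr_ge0 : 0 <=: n%:R *: r := bscale_ge0 (ler0n R n) r_ge0.
have y_Ae : in_Ae A (e - n%:R *: r).
  apply: (@in_Ae_bounds _ 1 (n%:R * m)); rewrite ?mulr_ge0 //.
    by rewrite scale1r; apply: subr_ge0_ble; rewrite opprB addrC subrK.
  rewrite opprB -scalerA; apply: ble_trans (ble_scale (ler0n R n) rm).
  by apply: subr_ge0_ble; rewrite opprB addrC subrK; exact: bid_ge0.
have := bsqr_ge0_Ae y_Ae.
rewrite bmulBl !bmulBr !bmul1l bmul1r !bmulZl !bmulZr rr0 !scaler0 subr0.
by rewrite -addrA -opprD => /subr_ge0_ble; exact: ble_trans (ble_addr _ nr_ge0).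
Qed.

Lemma idem_inverse p (l : R) : p ⊙ p = p -> l != 0 -> l + 1 != 0 ->
  is_inverse A (l *: e + p) (l^-1 *: (e - (l + 1)^-1 *: p)).
Proof.
move=> pp l0 l10.
have E : l *: e + p - (l + 1)^-1 *: (l *: p + p) = l *: e.
  by rewrite -{3}[p]scale1r -scalerDl scalerA mulVf // scale1r addrK.
split.
  rewrite bmulZr bmulBr bmul1r bmulZr bmulDl bmulZl bmul1l pp E.
  by rewrite scalerA mulVf // scale1r.
rewrite bmulZl bmulBl bmul1l bmulZl bmulDr bmulZr bmul1r pp E.
by rewrite scalerA mulVf // scale1r.
Qed.

Lemma idem_inverse_ge0 p (l : R) : 0 <=: p -> p <=: e -> 0 < l ->
  0 <=: l^-1 *: (e - (l + 1)^-1 *: p).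
Proof.
move=> p_ge0 p_le_e l_gt0; apply: bscale_ge0; first by rewrite invr_ge0 ltW.
apply: ble_subr_ge0; apply: ble_trans p_le_e; apply: subr_ge0_ble.
rewrite -{1}[p]scale1r -scalerBl; apply: bscale_ge0 p_ge0.
by rewrite subr_ge0 invf_le1 ?lerDr ?ltW // ltr_wpDl // ltW.
Qed.

Section BandProjectionElement.
Variable p : V.
Hypothesis p_BP : BP A p.

Lemma BP_ge0 : 0 <=: p.
Proof. by case: p_BP. Qed.

Lemma BP_sqr_le_e : p ⊙ p <=: e.
Proof. by case: p_BP => _ [_ [_ [_ [_ /(_ e bid_ge0) []]]]]; rewrite /LR bmul1l. Qed.

Lemma BP_cube_le : p ⊙ (p ⊙ p) <=: p.
Proof. by case: p_BP => _ [_ [_ [_ [_ /(_ p BP_ge0) []]]]]. Qed.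

Lemma BP_pow4 : p ⊙ (p ⊙ (p ⊙ p)) = p ⊙ p.
Proof. by case: p_BP => _ [_ [_ [_ [/(_ e) + _]]]]; rewrite /LR !bmul1l -bmulA. Qed.

Lemma BP_idem_le_e : p ⊙ p = p -> p <=: e.
Proof. by move=> pp; rewrite -pp; exact: BP_sqr_le_e. Qed.

Lemma BP_Ae_idem : in_Ae A p -> p ⊙ p = p.
Proof.
move=> p_Ae; have p_ge0 := BP_ge0.
have [m [m_ge0 pm]] := p_Ae; rewrite babs_id // in pm.
have p2_ge0 : 0 <=: p ⊙ p := bmul_pos p_ge0 p_ge0.
have p3_le_p2 : p ⊙ (p ⊙ p) <=: p ⊙ p.
  have x_Ae : in_Ae A (p - p ⊙ p).
    apply: (in_Ae_bounds m_ge0 ler01).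
      by apply: ble_trans pm; apply: subr_ge0_ble; rewrite opprB addrC subrK.
    rewrite opprB scale1r; apply: ble_trans BP_sqr_le_e.
    by apply: subr_ge0_ble; rewrite opprB addrC subrK.
  have := bsqr_ge0_Ae x_Ae.
  by rewrite bmulBl !bmulBr -!bmulA BP_pow4 opprB => /bhalf_ge0/subr_ge0_ble.
have p3E : p ⊙ (p ⊙ p) = p ⊙ p.
  apply: (ble_anti p3_le_p2).
  by have := bmul_le2l p_ge0 p3_le_p2; rewrite BP_pow4.
have r_ge0 : 0 <=: p - p ⊙ p by apply: ble_subr_ge0; rewrite -p3E; exact: BP_cube_le.
apply/esym/subr0_eq/Ae_sqr0_ge0_eq0 => //.
  apply: (in_Ae_bounds m_ge0 (lexx 0)).
    by apply: ble_trans pm; apply: subr_ge0_ble; rewrite opprB addrC subrK.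
  by rewrite scale0r -oppr0; apply: bleN.
by rewrite bmulBl !bmulBr -!bmulA BP_pow4 p3E !subrr.
Qed.

Lemma BP_le_of_inverse_ge0 (l : R) q : 0 < l -> (l *: e + p) ⊙ q = e -> 0 <=: q ->
  p <=: (l + l^-1) *: e.
Proof.
move=> l_gt0 lpq q_ge0.
have eE : e = l *: q + p ⊙ q by rewrite -lpq bmulDl bmulZl bmul1l.
have pq_le_e : p ⊙ q <=: e.
  by apply: subr_ge0_ble; rewrite {1}eE addrK; apply: bscale_ge0 (ltW l_gt0) q_ge0.
have q_le : q <=: l^-1 *: e.
  rewrite -[q](scalerK (lt0r_neq0 l_gt0)); apply: ble_scale; first by rewrite invr_ge0 ltW.
  by apply: subr_ge0_ble; rewrite {1}eE addrC addKr; apply: bmul_pos BP_ge0 q_ge0.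
have pE : p = l *: (p ⊙ q) + (p ⊙ p) ⊙ q.
  by rewrite -{1}(bmul1r A p) -lpq bmulA bmulDr bmulZr bmul1r bmulDl bmulZl.
rewrite pE scalerDl; apply: bleD; first exact: ble_scale (ltW l_gt0) pq_le_e.
by apply: ble_trans q_le; have := bmul_le2r q_ge0 BP_sqr_le_e; rewrite bmul1l.
Qed.

End BandProjectionElement.
End BanachLatticeAlgebraTheory.

Unset Implicit Arguments. Set Strict Implicit.

Theorem mainTheorem4 (R : realType) (V : completeNormedModType R)
  (A : BanachLatticeAlgebra R V) (p : V) :
  BP A p ->
  (OI A p <-> bmul A p p = p) /\
  (bmul A p p = p <-> in_Ae A p) /\
  (in_Ae A p <->
     exists lambda : R, `|p| < lambda /\
       exists q : V, is_inverse A (lambda *: bid A + p) q /\ ble A 0 q).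
Proof.
move=> p_BP; have p_ge0 := BP_ge0 p_BP.
have idem_Ae : bmul A p p = p -> in_Ae A p.
  by move=> pp; exists 1; rewrite ler01 babs_id // scale1r; split=> //; exact: BP_idem_le_e.
split; first by split=> [[] // | pp]; do !split=> //; exact: BP_idem_le_e.
split; first by split; [exact: idem_Ae | exact: BP_Ae_idem].
split=> [/(BP_Ae_idem p_BP) pp | [l [pl [q [[lpq _] q_ge0]]]]].
  have l_gt0 : 0 < `|p| + 1 by rewrite ltr_wpDl.
  exists (`|p| + 1); split; first by rewrite ltrDl.
  eexists; split; first by apply: idem_inverse; rewrite ?gt_eqF // ltr_wpDl // ltW.
  by apply: idem_inverse_ge0 => //; exact: BP_idem_le_e.
have l_gt0 : 0 < l := le_lt_trans (normr_ge0 p) pl.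
exists (l + l^-1); rewrite babs_id //; split; last exact: BP_le_of_inverse_ge0 lpq q_ge0.
by apply: addr_ge0; rewrite ?invr_ge0 ltW.
Qed.
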